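(* In $SO(6)$, writing diagonal matrices as vectors of their diagonal entries, let $\Gamma_1=\{(1,1,1,1,1,1),(-1,-1,-1,-1,-1,-1),(-1,-1,1,1,1,1),(-1,1,-1,1,1,1),(1,-1,-1,1,1,1),(-1,1,1,-1,-1,-1),(1,-1,1,-1,-1,-1),(1,1,-1,-1,-1,-1)\}$ and $\Gamma_2=\{(1,1,1,1,1,1),(-1,-1,-1,-1,-1,-1),(-1,-1,1,1,1,1),(1,1,-1,-1,1,1),(1,1,1,1,-1,-1),(-1,-1,-1,-1,1,1),(-1,-1,1,1,-1,-1),(1,1,-1,-1,-1,-1)\}$. Then $\Gamma_1$ and $\Gamma_2$ are subgroups of $SO(6)$ which are almost conjugate in $SO(6)$ but not conjugate in $SO(6)$.
   Context: Two finite subgroups $\Gamma_1,\Gamma_2$ of a group $G$ are almost conjugate in $G$ if $\#([b]_G\cap\Gamma_1)=\#([b]_G\cap\Gamma_2)$ for every conjugacy class $[b]_G$ of $G$. *)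

(* The real group SO(6) is stated over an arbitrary real
   closed field R (for R = the reals this is the paper's statement; by
   Tarski transfer the first-order statement is equivalent for all rcf). *)
From HB Require Import structures.
From mathcomp Require Import all_boot all_order all_algebra.
From Stdlib Require Import ClassicalEpsilon.
Set Implicit Arguments.
Unset Strict Implicit.
Unset Printing Implicit Defensive.
Import GRing.Theory Num.Theory.
Local Open Scope ring_scope.

Definition inSO (R : rcfType) (n : nat) (A : 'M[R]_n) : bool :=
  (A *m A^T == 1%:M) && (\det A == 1).

Definition is_subgroup_SO (R : rcfType) (n : nat) (S : seq 'M[R]_n) : Prop :=
  [/\ forall A, A \in S -> inSO A,
      1%:M \in S,
      forall A B, A \in S -> B \in S -> A *m B \in S
    & forall A, A \in S -> invmx A \in S].

Definition conj_in_SO (R : rcfType) (n : nat) (a b : 'M[R]_n) : Prop :=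
  exists2 g : 'M[R]_n, inSO g & a = g *m b *m invmx g.

Definition bool_of_prop (P : Prop) : bool :=
  if excluded_middle_informative P then true else false.

(* #([b] ∩ S), S viewed as a set *)
Definition class_count (R : rcfType) (n : nat) (b : 'M[R]_n) (S : seq 'M[R]_n) : nat :=
  count (fun a => bool_of_prop (conj_in_SO a b)) (undup S).

Definition almost_conjugate_SO (R : rcfType) (n : nat) (S1 S2 : seq 'M[R]_n) : Prop :=
  forall b : 'M[R]_n, inSO b -> class_count b S1 = class_count b S2.

Definition conjugate_SO (R : rcfType) (n : nat) (S1 S2 : seq 'M[R]_n) : Prop :=
  exists2 g : 'M[R]_n, inSO g & S2 =i [seq g *m x *m invmx g | x <- S1].

Definition diag6 (R : rcfType) (s : seq int) : 'M[R]_6 :=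
  diag_mx (\row_(i < 6) (nth 0 s i)%:~R).

Definition Gamma1 (R : rcfType) : seq 'M[R]_6 := map (diag6 R)
  [:: [:: 1; 1; 1; 1; 1; 1];
      [:: -1; -1; -1; -1; -1; -1];
      [:: -1; -1; 1; 1; 1; 1];
      [:: -1; 1; -1; 1; 1; 1];
      [:: 1; -1; -1; 1; 1; 1];
      [:: -1; 1; 1; -1; -1; -1];
      [:: 1; -1; 1; -1; -1; -1];
      [:: 1; 1; -1; -1; -1; -1]]%R.

Definition Gamma2 (R : rcfType) : seq 'M[R]_6 := map (diag6 R)
  [:: [:: 1; 1; 1; 1; 1; 1];
      [:: -1; -1; -1; -1; -1; -1];
      [:: -1; -1; 1; 1; 1; 1];
      [:: 1; 1; -1; -1; 1; 1];
      [:: 1; 1; 1; 1; -1; -1];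
      [:: -1; -1; -1; -1; 1; 1];
      [:: -1; -1; 1; 1; -1; -1];
      [:: 1; 1; -1; -1; -1; -1]]%R.

From HB Require Import structures.
From mathcomp Require Import all_boot all_order all_algebra all_fingroup.
From Stdlib Require Import ClassicalEpsilon.
Set Implicit Arguments.
Unset Strict Implicit.
Unset Printing Implicit Defensive.
Import GRing.Theory Num.Theory.
Local Open Scope ring_scope.

(* All sixteen matrices are diagonal sign matrices, so products, inverses and
   traces are read off from their sign vectors, and the finitely many checks
   on these integer vectors are decided by computation.
   - Subgroups: a list of sign vectors of product 1, containing (1,...,1) and
     closed under coordinatewise product, gives a subgroup of SO(n).
   - Almost conjugacy: conjugacy in SO(n) is an equivalence relation, so two
     duplicate-free lists that are elementwise SO(n)-conjugate meet every
     conjugacy class equally often.  Two diagonal matrices whose diagonals are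
     permutations of each other are conjugate by a permutation matrix; when
     some diagonal entry repeats, the permutation may be taken even (compose
     with the transposition of two equal entries), hence in SO(n).  Listed in
     order, the elements of Gamma1 and Gamma2 are pairwise such.
   - Non-conjugacy: conjugation preserves traces, distinctness and products.
     Gamma1 contains distinct a, b of trace 2 with tr(ab) = 2; a direct check
     shows that no such pair exists in Gamma2. *)

Section SpecialOrthogonal.
Variables (R : rcfType) (n : nat).
Implicit Types (g h x y b : 'M[R]_n).

Lemma inSO_unit g : inSO g -> g \in unitmx.
Proof. by case/andP=> /eqP /mulmx1_unit[]. Qed.

Lemma inSO_invmx g : inSO g -> invmx g = g^T.
Proof.
case/andP=> /eqP gK _; have [gU _] := mulmx1_unit gK.
by rewrite -[invmx g]mulmx1 -gK mulmxA mulVmx // mul1mx.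
Qed.

Lemma inSO_mul g h : inSO g -> inSO h -> inSO (g *m h).
Proof.
case/andP=> /eqP gK /eqP dg /andP[/eqP hK /eqP dh].
rewrite /inSO trmx_mul mulmxA -(mulmxA g h) hK mulmx1 gK eqxx /=.
by rewrite det_mulmx dg dh mulr1.
Qed.

Lemma inSO_inv g : inSO g -> inSO (invmx g).
Proof.
move=> Sg; rewrite inSO_invmx //; case/andP: Sg => /eqP gK /eqP dg.
by rewrite /inSO trmxK (mulmx1C gK) eqxx det_tr dg eqxx.
Qed.

Lemma conj_in_SO_sym x y : conj_in_SO x y -> conj_in_SO y x.
Proof.
case=> g Sg ->; exists (invmx g); first exact: inSO_inv.
by rewrite invmxK !mulmxA mulVmx ?inSO_unit // mul1mx mulmxKV ?inSO_unit.
Qed.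

Lemma conj_in_SO_trans x y b : conj_in_SO x y -> conj_in_SO y b -> conj_in_SO x b.
Proof.
case=> g Sg -> [h Sh ->]; exists (g *m h); first exact: inSO_mul.
by rewrite !inSO_invmx ?inSO_mul // trmx_mul !mulmxA.
Qed.

Lemma bool_of_prop_iff (P Q : Prop) : (P <-> Q) -> bool_of_prop P = bool_of_prop Q.
Proof.
rewrite /bool_of_prop => PQ.
case: excluded_middle_informative => p; case: excluded_middle_informative => q //.
all: by exfalso; tauto.
Qed.

Lemma class_count_conj_pairs (S1 S2 : seq 'M[R]_n) b :
  uniq S1 -> uniq S2 -> size S1 = size S2 ->
  {in zip S1 S2, forall xy, conj_in_SO xy.2 xy.1} ->
  class_count b S1 = class_count b S2.
Proof.
move=> U1 U2 eq_size conjS; rewrite /class_count !undup_id //.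
rewrite -[in LHS](@unzip1_zip _ _ S1 S2) ?eq_size //.
rewrite -[in RHS](@unzip2_zip _ _ S1 S2) ?eq_size // !count_map.
apply: eq_in_count => xy /conjS xy_conj /=; apply: bool_of_prop_iff.
split; [exact: conj_in_SO_trans | exact: conj_in_SO_trans (conj_in_SO_sym _)].
Qed.

Lemma conjugate_SO_trace_pair (S1 S2 : seq 'M[R]_n) x y :
  conjugate_SO S1 S2 -> x \in S1 -> y \in S1 -> x != y ->
  exists x', exists2 y', (x' \in S2) && (y' \in S2) &
    [/\ x' != y', \tr x' = \tr x, \tr y' = \tr y & \tr (x' *m y') = \tr (x *m y)].
Proof.
case=> g /inSO_unit gU eqS2 xS1 yS1 xy.
pose cj z := g *m z *m invmx g.
have cj_tr z : \tr (cj z) = \tr z by rewrite mxtrace_mulC mulmxA mulVmx // mul1mx.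
have cjM z w : cj z *m cj w = cj (z *m w) by rewrite /cj !mulmxA mulmxKV.
have cjK z : invmx g *m cj z *m g = z by rewrite !mulmxA mulVmx // mul1mx mulmxKV.
exists (cj x); exists (cj y); first by rewrite !eqS2 !map_f.
split; rewrite ?cjM ?cj_tr //.
by apply: contraNneq xy => /(congr1 (fun z => invmx g *m z *m g)); rewrite !cjK => ->.
Qed.

Lemma perm_mx_SO (p : 'S_n) : ~~ odd_perm p -> inSO (perm_mx p : 'M[R]_n).
Proof.
move=> p_even; rewrite /inSO tr_perm_mx -perm_mxM mulgV perm_mx1 eqxx /=.
by rewrite det_perm (negbTE p_even) expr0.
Qed.

Lemma perm_mx_conj_diag (p : 'S_n) (d : 'rV[R]_n) :
  perm_mx p *m diag_mx d *m (perm_mx p)^T = diag_mx (col_perm p d).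
Proof.
rewrite tr_perm_mx -col_permE -row_permE; apply/matrixP=> i j.
by rewrite !mxE (inj_eq perm_inj).
Qed.

Lemma diag_col_perm_conj (p : 'S_n) (d : 'rV[R]_n) (i j : 'I_n) :
  i != j -> d 0 i = d 0 j -> conj_in_SO (diag_mx (col_perm p d)) (diag_mx d).
Proof.
move=> ij dij.
have [q q_even <-] : exists2 q : 'S_n, ~~ odd_perm q & col_perm q d = col_perm p d.
  case odd_p: (odd_perm p); last by exists p; rewrite ?odd_p.
  exists (p * tperm i j)%g; first by rewrite odd_permM odd_tperm ij odd_p.
  rewrite col_permM; congr col_perm.
  by apply/rowP=> k; rewrite !mxE; case: tpermP => // ->.
exists (perm_mx q); first exact: perm_mx_SO.
by rewrite inSO_invmx ?perm_mx_SO // perm_mx_conj_diag.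
Qed.

End SpecialOrthogonal.

Definition mulseq (s t : seq int) : seq int :=
  [seq nth 0 s i * nth 0 t i | i <- iota 0 6].
Definition ones : seq int := nseq 6 1.
Definition prod6 (s : seq int) : int := foldr (fun i a => nth 0 s i * a) 1 (iota 0 6).
Definition sum6 (s : seq int) : int := foldr (fun i a => nth 0 s i + a) 0 (iota 0 6).

Section DiagonalSignMatrices.
Variable R : rcfType.

Lemma diag6M s t : diag6 R s *m diag6 R t = diag6 R (mulseq s t).
Proof.
rewrite /diag6 mulmx_diag; congr diag_mx; apply/rowP=> i; rewrite !mxE.
by rewrite /mulseq (nth_map 0%N) ?size_iota // nth_iota // add0n intrM.
Qed.

Lemma diag6_ones : diag6 R ones = 1%:M.
Proof.
rewrite /diag6 -diag_const_mx; congr diag_mx; apply/rowP => i; rewrite !mxE.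
by rewrite nth_nseq ltn_ord.
Qed.

Lemma tr_diag6 s : (diag6 R s)^T = diag6 R s.
Proof. exact: tr_diag_mx. Qed.

Lemma det_diag6 s : \det (diag6 R s) = (prod6 s)%:~R.
Proof. by rewrite det_diag !big_ord_recl big_ord0 !mxE /prod6 /= !intrM. Qed.

Lemma trace_diag6 s : \tr (diag6 R s) = (sum6 s)%:~R.
Proof. by rewrite mxtrace_diag !big_ord_recl big_ord0 !mxE /sum6 /= !intrD. Qed.

Lemma diag6_inj s t : size s = 6%N -> size t = 6%N -> diag6 R s = diag6 R t -> s = t.
Proof.
move=> s6 t6 st; apply: (@eq_from_nth _ 0) => [|i]; first by rewrite s6 t6.
rewrite s6 => i6; have := congr1 (fun M : 'M[R]_6 => M (Ordinal i6) (Ordinal i6)) st.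
by rewrite !mxE eqxx !mulr1n => /intr_inj.
Qed.

(* A list of sign vectors of product 1 containing (1,...,1) and closed under
   coordinatewise products is a subgroup of SO(6): each element is its own
   inverse. *)
Lemma sign_subgroup (L : seq (seq int)) :
  all (fun s => (mulseq s s == ones) && (prod6 s == 1)) L -> ones \in L ->
  all (fun s => all (fun t => mulseq s t \in L) L) L ->
  is_subgroup_SO (map (diag6 R) L).
Proof.
move=> /allP signL oneL /allP mulL.
have SO s : s \in L -> inSO (diag6 R s).
  move=> /signL /andP[/eqP ss /eqP ps].
  by rewrite /inSO tr_diag6 diag6M ss diag6_ones det_diag6 ps !eqxx.
split.
- by move=> _ /mapP[s sL ->]; apply: SO.
- by rewrite -diag6_ones map_f.
- by move=> _ _ /mapP[s sL ->] /mapP[t tL ->]; rewrite diag6M map_f ?(allP (mulL s sL)).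
- by move=> _ /mapP[s sL ->]; rewrite inSO_invmx ?SO // tr_diag6 map_f.
Qed.

Lemma uniq_diag6 (L : seq (seq int)) :
  uniq L -> all (fun s => size s == 6%N) L -> uniq (map (diag6 R) L).
Proof.
move=> uL /allP L6; rewrite map_inj_in_uniq // => s t sL tL.
by apply: diag6_inj; apply/eqP; [apply: L6 | apply: L6].
Qed.

Lemma diag6_perm_conj s t :
  size s = 6%N -> perm_eq t s -> ~~ uniq s -> conj_in_SO (diag6 R t) (diag6 R s).
Proof.
move=> s6 ts /(uniqPn 0)[i [j [ij js sij]]].
have /eqP s6b := s6; have /tuple_permP[p tE] : perm_eq t (Tuple s6b) by [].
have i6 : (i < 6)%N by rewrite -s6 (ltn_trans ij).
rewrite s6 in js.
suff -> : diag6 R t = diag_mx (col_perm p (\row_(k < 6) (nth 0 s k)%:~R)).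
  apply: (@diag_col_perm_conj _ _ p _ (Ordinal i6) (Ordinal js)).
    by rewrite -val_eqE /= neq_ltn ij.
  by rewrite !mxE sij.
congr diag_mx; apply/rowP=> k; rewrite !mxE tE /= (nth_map k) ?size_enum_ord //.
by rewrite nth_ord_enum (tnth_nth 0).
Qed.

Lemma almost_conjugate_diag6 (L1 L2 : seq (seq int)) :
  uniq L1 -> uniq L2 -> all (fun s => size s == 6%N) (L1 ++ L2) ->
  size L1 = size L2 ->
  all (fun st => perm_eq st.2 st.1 && ~~ uniq st.1) (zip L1 L2) ->
  almost_conjugate_SO (map (diag6 R) L1) (map (diag6 R) L2).
Proof.
move=> U1 U2; rewrite all_cat => /andP[L1_6 L2_6] eq_size /allP pairs b _.
apply: class_count_conj_pairs; rewrite ?uniq_diag6 ?size_map //.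
have zip_map2 (f : seq int -> 'M[R]_6) s t :
    zip (map f s) (map f t) = map (fun st => (f st.1, f st.2)) (zip s t).
  by elim: s t => [|x s IHs] [|y t] //=; rewrite IHs.
rewrite zip_map2 => _ /mapP[[s t] st_in ->] /=.
have /andP[ts s_rep] := pairs _ st_in.
apply: diag6_perm_conj => //; apply/eqP/(allP L1_6).
by rewrite -(@unzip1_zip _ _ L1 L2) ?eq_size // (map_f fst st_in).
Qed.

End DiagonalSignMatrices.

(* The sign vectors of the diagonals of Gamma1 and Gamma2, in matching order. *)
Definition L1 : seq (seq int) :=
  [:: [:: 1; 1; 1; 1; 1; 1];
      [:: -1; -1; -1; -1; -1; -1];
      [:: -1; -1; 1; 1; 1; 1];
      [:: -1; 1; -1; 1; 1; 1];
      [:: 1; -1; -1; 1; 1; 1];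
      [:: -1; 1; 1; -1; -1; -1];
      [:: 1; -1; 1; -1; -1; -1];
      [:: 1; 1; -1; -1; -1; -1]].

Definition L2 : seq (seq int) :=
  [:: [:: 1; 1; 1; 1; 1; 1];
      [:: -1; -1; -1; -1; -1; -1];
      [:: -1; -1; 1; 1; 1; 1];
      [:: 1; 1; -1; -1; 1; 1];
      [:: 1; 1; 1; 1; -1; -1];
      [:: -1; -1; -1; -1; 1; 1];
      [:: -1; -1; 1; 1; -1; -1];
      [:: 1; 1; -1; -1; -1; -1]].

Lemma Gamma_not_conjugate (R : rcfType) :
  ~ conjugate_SO (map (diag6 R) L1) (map (diag6 R) L2).
Proof.
move=> conj12; pose a : seq int := [:: -1; -1; 1; 1; 1; 1].
pose b : seq int := [:: -1; 1; -1; 1; 1; 1].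
have [|||x' [y' /andP[]]] := conjugate_SO_trace_pair (x := diag6 R a) (y := diag6 R b) conj12.
- by rewrite map_f.
- by rewrite map_f.
- by apply/eqP => /diag6_inj ab; have := ab erefl erefl.
case/mapP=> s sL2 -> /mapP[t tL2 ->].
rewrite !diag6M !trace_diag6 => -[/eqP diag_st /intr_inj tr_s /intr_inj tr_t /intr_inj tr_st].
have no_pair_in_L2 : all (fun s => all (fun t => (s != t) ==> (sum6 s == sum6 a) ==>
    (sum6 t == sum6 b) ==> (sum6 (mulseq s t) != sum6 (mulseq a b))) L2) L2.
  by vm_compute.
have := allP (allP no_pair_in_L2 s sL2) t tL2.
by rewrite tr_s tr_t tr_st !eqxx; case: eqP => // st; rewrite st in diag_st.
Qed.

Theorem mainTheorem3 (R : rcfType) :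
  [/\ is_subgroup_SO (Gamma1 R), is_subgroup_SO (Gamma2 R),
      almost_conjugate_SO (Gamma1 R) (Gamma2 R)
    & ~ conjugate_SO (Gamma1 R) (Gamma2 R)].
Proof.
have -> : Gamma1 R = map (diag6 R) L1 by [].
have -> : Gamma2 R = map (diag6 R) L2 by [].
split.
- by apply: sign_subgroup; vm_compute.
- by apply: sign_subgroup; vm_compute.
- by apply: almost_conjugate_diag6; vm_compute.
- exact: Gamma_not_conjugate.
Qed.
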